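(* Let $V\subset(1,1,\dots,1)^\perp\subset\mathbb R^m$ be a self-saturated linear subspace. Then $V$ has an orthonormal basis $\{u_i\}$ such that $u_i\diamond u_j\in\mathbb Ru_i\cup\mathbb Ru_j$ for all $i\neq j$.
   Context: $\mathbb R^m$ carries its standard inner product and standard basis. For $a,b\in\mathbb R^m$, $a\diamond b=(a_1b_1,\dots,a_mb_m)$. A linear subspace $V\subset(1,\dots,1)^\perp$ is self-saturated if $a\diamond b\in V$ for all orthogonal vectors $a,b\in V$. *)

(* R^m is modelled as row vectors 'rV[R]_m over a real closed field R. *)
From HB Require Import structures.
From mathcomp Require Import all_boot all_order all_algebra.
Set Implicit Arguments. Unset Strict Implicit. Unset Printing Implicit Defensive.
Import Order.TTheory GRing.Theory Num.Theory.
Local Open Scope ring_scope.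

Definition dotv (R : rcfType) (m : nat) (u v : 'rV[R]_m) : R :=
  \sum_(i < m) u ord0 i * v ord0 i.

Definition hadamard (R : rcfType) (m : nat) (a b : 'rV[R]_m) : 'rV[R]_m :=
  \row_(i < m) (a ord0 i * b ord0 i).

Definition onesv (R : rcfType) (m : nat) : 'rV[R]_m := const_mx 1.

Definition in_ones_perp (R : rcfType) (m : nat) (V : {vspace 'rV[R]_m}) : Prop :=
  forall v, v \in V -> dotv v (onesv R m) = 0.

Definition self_saturated (R : rcfType) (m : nat) (V : {vspace 'rV[R]_m}) : Prop :=
  in_ones_perp V /\
  forall a b, a \in V -> b \in V -> dotv a b = 0 -> hadamard a b \in V.

(** For a vector [w] of [V] with [w_i <> 0], the slice
    [H = {v in V | v_i = 0}] is again self-saturated and of smaller dimension,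
    so it has an orthonormal basis [s] with [s_j <> s_k in R s_k] for [j < k].
    Let [a] be the unit vector of [V] orthogonal to [H] and [h] in [H].
    Saturation applied to the orthogonal pairs [(a, h)] and
    [(a + h, <h,h> a - h)] puts [<h,h> a <> a - h <> h] in [V]; removing its
    [a_i]-multiple of [a] lands in [H], hence is orthogonal to [a], which gives
    [<a <> h, h> = c <h,h>] with [c = <a, a <> a> - a_i]. Polarisation yields
    [<a <> h, g> = c <h,g>] on [H], and as [a <> h - c h] lies in [H] it is
    zero. So [a] acts on [H] as the scalar [c], and [a :: s] is the basis. *)
From HB Require Import structures.
From mathcomp Require Import all_boot all_order all_algebra ring.
Set Implicit Arguments. Unset Strict Implicit. Unset Printing Implicit Defensive.
Import Order.TTheory GRing.Theory Num.Theory.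
Local Open Scope ring_scope.

Section DotProduct.
Variables (R : rcfType) (m : nat).
Implicit Types u v w : 'rV[R]_m.

Lemma dotvC u v : dotv u v = dotv v u.
Proof. by apply: eq_bigr => j _; rewrite mulrC. Qed.

Lemma dotvDl u v w : dotv (u + v) w = dotv u w + dotv v w.
Proof. by rewrite /dotv -big_split; apply: eq_bigr => j _; rewrite !mxE mulrDl. Qed.

Lemma dotvZl (k : R) u w : dotv (k *: u) w = k * dotv u w.
Proof. by rewrite /dotv mulr_sumr; apply: eq_bigr => j _; rewrite !mxE mulrA. Qed.

Lemma dotvBl u v w : dotv (u - v) w = dotv u w - dotv v w.
Proof. by rewrite dotvDl -scaleN1r dotvZl mulN1r. Qed.

Lemma dotvDr u v w : dotv w (u + v) = dotv w u + dotv w v.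
Proof. by rewrite dotvC dotvDl !(dotvC w). Qed.

Lemma dotvZr (k : R) u w : dotv w (k *: u) = k * dotv w u.
Proof. by rewrite dotvC dotvZl dotvC. Qed.

Lemma dotvBr u v w : dotv w (u - v) = dotv w u - dotv w v.
Proof. by rewrite dotvC dotvBl !(dotvC w). Qed.

Lemma dotv_suml n (F : 'I_n -> 'rV[R]_m) w :
  dotv (\sum_(k < n) F k) w = \sum_(k < n) dotv (F k) w.
Proof.
rewrite /dotv; under eq_bigr => j _ do rewrite summxE mulr_suml.
by rewrite exchange_big.
Qed.

Lemma dotv_sumr n (F : 'I_n -> 'rV[R]_m) w :
  dotv w (\sum_(k < n) F k) = \sum_(k < n) dotv w (F k).
Proof. by rewrite dotvC dotv_suml; apply: eq_bigr => k _; rewrite dotvC. Qed.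

Lemma dotv_ge0 u : 0 <= dotv u u.
Proof. by apply: sumr_ge0 => j _; rewrite -expr2 sqr_ge0. Qed.

Lemma dotv_eq0 u : (dotv u u == 0) = (u == 0).
Proof.
apply/eqP/eqP => [u0|->]; last by rewrite /dotv big1 // => j _; rewrite mxE mul0r.
apply/rowP => j; rewrite mxE; apply/eqP; rewrite -sqrf_eq0; apply/eqP.
by apply: (psumr_eq0P (P := predT) (fun k _ => sqr_ge0 (u ord0 k))).
Qed.

Lemma hadamardC u v : hadamard u v = hadamard v u.
Proof. by apply/rowP => j; rewrite !mxE mulrC. Qed.

Lemma hadamardDr u v w : hadamard u (v + w) = hadamard u v + hadamard u w.
Proof. by apply/rowP => j; rewrite !mxE mulrDr. Qed.

Lemma dotv_hadamardA u v w : dotv u (hadamard v w) = dotv (hadamard u v) w.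
Proof. by apply: eq_bigr => j _; rewrite !mxE mulrA. Qed.

Lemma dotv_hadamardAC u v w : dotv (hadamard u v) w = dotv (hadamard u w) v.
Proof. by apply: eq_bigr => j _; rewrite !mxE mulrAC. Qed.

Definition orthonormal (s : seq 'rV[R]_m) :=
  forall i j, (i < size s)%N -> (j < size s)%N -> dotv s`_i s`_j = (i == j)%:R.

Lemma dotv_orthonormal_residual (s : seq 'rV[R]_m) w h :
  orthonormal s -> h \in <<s>>%VS ->
  dotv (w - \sum_(k < size s) dotv w s`_k *: s`_k) h = 0.
Proof.
move=> onb /(coord_span (X := in_tuple s)) ->; rewrite dotv_sumr big1 // => k _.
rewrite dotvZr dotvBl dotv_suml (bigD1 k) //= big1 => [|l /negbTE lk].
  by rewrite dotvZl onb // eqxx mulr1 addr0 subrr mulr0.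
by rewrite dotvZl onb // -[_ == _]/(l == k) lk mulr0.
Qed.

Lemma sqrt_dotv_eq0 u : (Num.sqrt (dotv u u) == 0) = (u == 0).
Proof. by rewrite sqrtr_eq0 le_eqVlt ltNge dotv_ge0 orbF dotv_eq0. Qed.

Lemma exists_coord_neq0 u : u != 0 -> exists i, u ord0 i != 0.
Proof.
move=> u0; apply/existsP; move: u0; apply: contraNT => /existsPn u0.
by apply/eqP/rowP => j; rewrite mxE; apply/eqP/negbNE/u0.
Qed.

Definition normalize u := (Num.sqrt (dotv u u))^-1 *: u.

Lemma dotv_normalize u : u != 0 -> dotv (normalize u) (normalize u) = 1.
Proof.
rewrite -sqrt_dotv_eq0 => r0; set r := Num.sqrt (dotv u u) in r0 *.
have uu : dotv u u = r ^+ 2 by rewrite sqr_sqrtr ?dotv_ge0.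
by rewrite /normalize -/r dotvZl dotvZr uu; field.
Qed.

End DotProduct.

Section CoordSlice.
Variables (R : rcfType) (m : nat).
Implicit Types V : {vspace 'rV[R]_m}.

Definition coord_slice V (i : 'I_m) : {vspace 'rV[R]_m} :=
  (V :&: lker (linfun (col i : 'rV[R]_m -> 'cV_1)))%VS.

Lemma memv_coord_slice V i v :
  (v \in coord_slice V i) = (v \in V) && (v ord0 i == 0).
Proof.
rewrite memv_cap memv_ker lfunE /=; congr (_ && _).
apply/eqP/eqP => [/matrixP/(_ ord0 ord0)|vi]; rewrite ?mxE //.
by apply/matrixP => p q; rewrite !ord1 !mxE.
Qed.

Lemma dim_coord_slice V i w :
  w \in V -> w ord0 i != 0 -> (\dim (coord_slice V i) < \dim V)%N.
Proof.
move=> wV wi; have sub : (coord_slice V i <= V)%VS := capvSl _ _.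
rewrite (ltn_leqif (dimv_leqif_eq sub)); apply/negP => /eqP slice_eq.
by move: wV; rewrite -slice_eq memv_coord_slice (negbTE wi) andbF.
Qed.

Lemma basis_of_coord_slice_cons V i (s : seq 'rV[R]_m) u :
  basis_of (coord_slice V i) s -> u \in V -> u ord0 i != 0 ->
  basis_of V (u :: s).
Proof.
case/andP=> /eqP span_s free_s uV ui.
rewrite /basis_of free_cons span_cons span_s free_s.
rewrite memv_coord_slice (negbTE ui) andbF.
rewrite eqEsubv subv_add -memvE uV capvSl !andbT; apply/subvP => v vV.
pose t := v ord0 i / u ord0 i.
rewrite -(subrK (t *: u) v) addrC memv_add ?memvZ ?memv_line //.
by rewrite memv_coord_slice memvB ?memvZ //= !mxE divfK // subrr.
Qed.

Lemma self_saturated_coord_slice V i :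
  self_saturated V -> self_saturated (coord_slice V i).
Proof.
case=> perp sat; split => [v|a b]; rewrite !memv_coord_slice.
  by case/andP=> vV _; exact: perp.
move=> /andP[aV /eqP ai] /andP[bV /eqP bi] ab.
by rewrite sat //= mxE ai mul0r.
Qed.

End CoordSlice.

Section Saturation.
Variables (R : rcfType) (m : nat) (V : {vspace 'rV[R]_m}).
Hypothesis satV : self_saturated V.

Lemma self_saturated_hadamard_sq x y : x \in V -> y \in V -> dotv x y = 0 ->
  dotv y y *: hadamard x x - dotv x x *: hadamard y y \in V.
Proof.
case: satV => _ sat xV yV xy.
pose p := x + y; pose q := dotv y y *: x - dotv x x *: y.
have pq : dotv p q = 0.
  by rewrite dotvDl !dotvBr !dotvZr xy dotvC xy; ring.
have -> : dotv y y *: hadamard x x - dotv x x *: hadamard y y =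
    hadamard p q - (dotv y y - dotv x x) *: hadamard x y.
  by apply/rowP => j; rewrite !mxE; ring.
have pV : p \in V by rewrite memvD.
have qV : q \in V by rewrite memvB ?memvZ.
by rewrite memvB ?memvZ ?sat.
Qed.

Variables (i : 'I_m) (a : 'rV[R]_m).
Hypotheses (aV : a \in V) (a_unit : dotv a a = 1)
  (a_perp : forall h, h \in coord_slice V i -> dotv a h = 0).

Let c := dotv a (hadamard a a) - a ord0 i.

Lemma dotv_hadamard_unit_self h :
  h \in coord_slice V i -> dotv (hadamard a h) h = c * dotv h h.
Proof.
move=> hH; move: (hH); rewrite memv_coord_slice => /andP[hV /eqP hi].
have := self_saturated_hadamard_sq aV hV (a_perp hH).
rewrite a_unit scale1r; set z := _ - _ => zV.
have zH : z - (dotv h h * a ord0 i) *: a \in coord_slice V i.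
  by rewrite memv_coord_slice memvB ?memvZ //= !mxE hi; apply/eqP; ring.
have := a_perp zH; rewrite dotvBr dotvZr a_unit dotvBr dotvZr.
rewrite -dotv_hadamardA => orth.
by apply/eqP; rewrite eq_sym -subr_eq0 -orth /c; apply/eqP; ring.
Qed.

Lemma dotv_hadamard_unit h g :
  h \in coord_slice V i -> g \in coord_slice V i ->
  dotv (hadamard a h) g = c * dotv h g.
Proof.
move=> hH gH; have := dotv_hadamard_unit_self (memvD hH gH).
rewrite hadamardDr !dotvDl !dotvDr !dotv_hadamard_unit_self //.
rewrite (dotv_hadamardAC a g h) (dotvC g h) => /eqP.
rewrite -subr_eq0 => /eqP polar.
apply: (@mulfI _ 2); first by rewrite pnatr_eq0.
by apply/eqP; rewrite -subr_eq0 -polar; apply/eqP; ring.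
Qed.

Lemma hadamard_unit_coord_slice :
  exists c, forall h, h \in coord_slice V i -> hadamard a h = c *: h.
Proof.
exists c => h hH; move: (hH); rewrite memv_coord_slice => /andP[hV /eqP hi].
have eH : hadamard a h - c *: h \in coord_slice V i.
  case: satV => _ sat.
  by rewrite memv_coord_slice memvB ?memvZ ?sat ?a_perp //= !mxE hi !mulr0 subrr.
apply/eqP; rewrite -subr_eq0 -dotv_eq0 dotvBl dotvZl.
by rewrite dotv_hadamard_unit // subrr.
Qed.

End Saturation.

Section TriangularBasis.
Variables (R : rcfType) (m : nat).
Implicit Types V : {vspace 'rV[R]_m}.

Definition hadamard_triangular_onb V (s : seq 'rV[R]_m) :=
  [/\ basis_of V s, orthonormal s
    & forall j k, (j < k < size s)%N ->
        exists c : R, hadamard s`_j s`_k = c *: s`_k].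

Lemma hadamard_triangular_onb_cons V i s u c :
  hadamard_triangular_onb (coord_slice V i) s ->
  u \in V -> u ord0 i != 0 -> dotv u u = 1 ->
  (forall h, h \in coord_slice V i -> dotv u h = 0) ->
  (forall h, h \in coord_slice V i -> hadamard u h = c *: h) ->
  hadamard_triangular_onb V (u :: s).
Proof.
move=> [basis_s onb_s tri_s] uV ui u_unit u_perp u_scalar.
have s_mem k : (k < size s)%N -> s`_k \in coord_slice V i.
  by case/andP: basis_s => /eqP <- _ ks; rewrite memv_span ?mem_nth.
split; first exact: basis_of_coord_slice_cons basis_s uV ui.
- move=> [|j] [|k] /= js ks; rewrite ?u_unit ?u_perp ?s_mem //.
    by rewrite dotvC u_perp ?s_mem.
  exact: onb_s.
- move=> [|j] [|k] //= => [ks | jks]; first by exists c; rewrite u_scalar ?s_mem.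
  exact: tri_s.
Qed.

Lemma exists_hadamard_triangular_onb V :
  self_saturated V -> exists s, hadamard_triangular_onb V s.
Proof.
have [n] := ubnP (\dim V); elim: n V => // n IH V /ltnSE dimV satV.
have [->|V0] := eqVneq V 0%VS.
  by exists [::]; split => [||j k]; rewrite ?nil_basis ?ltn0 ?andbF.
pose w := vpick V; have wV : w \in V := memv_pick V.
have [i wi] : exists i, w ord0 i != 0 by apply: exists_coord_neq0; rewrite vpick0.
have [s [basis_s onb_s tri_s]] := IH (coord_slice V i)
  (leq_trans (dim_coord_slice wV wi) dimV) (self_saturated_coord_slice i satV).
have span_s : <<s>>%VS = coord_slice V i by case/andP: basis_s => /eqP.
pose u0 := w - \sum_(k < size s) dotv w s`_k *: s`_k.
have u0_perp h : h \in coord_slice V i -> dotv u0 h = 0.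
  by rewrite -span_s; exact: dotv_orthonormal_residual.
have u0i : u0 ord0 i = w ord0 i.
  rewrite !mxE summxE big1 ?subr0 // => k _; rewrite mxE.
  have := memv_span (mem_nth 0 (ltn_ord k)); rewrite span_s memv_coord_slice.
  by case/andP=> _ /eqP ->; rewrite mulr0.
have u0V : u0 \in V.
  rewrite memvB // memv_suml // => k _; rewrite memvZ //.
  by have := memv_span (mem_nth 0 (ltn_ord k)); rewrite span_s => /memv_capP[].
have u00 : u0 != 0 by apply: contra_neq wi => /rowP/(_ i); rewrite u0i mxE => ->.
pose u := normalize u0.
have uV : u \in V by rewrite memvZ.
have u_perp h : h \in coord_slice V i -> dotv u h = 0.
  by move=> hH; rewrite dotvZl (u0_perp h hH) mulr0.
have ui : u ord0 i != 0.
  by rewrite mxE u0i mulf_neq0 // invr_eq0 sqrt_dotv_eq0.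
have [c u_scalar] := hadamard_unit_coord_slice satV uV (dotv_normalize u00) u_perp.
exists (u :: s).
exact: hadamard_triangular_onb_cons uV ui (dotv_normalize u00) u_perp u_scalar.
Qed.

End TriangularBasis.

Theorem mainTheorem9 (R : rcfType) (m : nat) (V : {vspace 'rV[R]_m}) :
  self_saturated V ->
  exists s : seq 'rV[R]_m,
    [/\ basis_of V s,
        (forall i j, (i < size s)%N -> (j < size s)%N ->
           dotv s`_i s`_j = (i == j)%:R)
      & (forall i j, (i < size s)%N -> (j < size s)%N -> i != j ->
           (exists c : R, hadamard s`_i s`_j = c *: s`_i) \/
           (exists c : R, hadamard s`_i s`_j = c *: s`_j))].
Proof.
move=> /exists_hadamard_triangular_onb[s [basis_s onb_s tri_s]].
exists s; split=> // i j ilt jlt; case: (ltngtP i j) => [ij|ji|->] //= _.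
- by right; apply: tri_s; rewrite ij.
- by left; have [|c e] := tri_s j i; [rewrite ji | exists c; rewrite hadamardC].
Qed.
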